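(* Let $Y\sim N(\theta,\sigma^2)$ with $\sigma>0$, let $\tau\ge1$, and let $\theta_0=E_0(Y^2-\sigma^2\tau)_+$, where $E_0$ denotes expectation under $\theta=0$. Then $$\big(E(Y^2-\sigma^2\tau)_+-\theta_0\big)^2\le\max\Big\{6\sigma^2\theta^2+\sigma^4\frac{4\tau^{1/2}+18}{e^{\tau/2}},\;10\theta^4\Big\}.$$
   Context: $x_+=\max\{x,0\}$. *)

From Stdlib Require Import Reals Lra.
Open Scope R_scope.

Definition pos_part (x : R) : R := Rmax x 0.

Definition normal_density (theta sigma : R) (y : R) : R :=
  exp (- (y - theta) ^ 2 / (2 * sigma ^ 2)) / (sigma * sqrt (2 * PI)).

Definition improper_integral_R (f : R -> R) (l : R) : Prop :=
  forall eps : R, 0 < eps ->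
    exists M : R, forall a b : R, a <= - M -> M <= b ->
      exists pr : Riemann_integrable f a b, Rabs (RiemannInt pr - l) < eps.

Definition normal_expectation (theta sigma : R) (g : R -> R) (l : R) : Prop :=
  improper_integral_R (fun y => g y * normal_density theta sigma y) l.

From Stdlib Require Import Reals Lra.
From Coquelicot Require Import Coquelicot.
Open Scope R_scope.

(* Write f y = (y^2 - sigma^2 tau)_+ and phi for the N(0, sigma^2) density.  The
   substitution y = z + theta gives E - theta0 = int (f (z + theta) - f z) phi z dz,
   and since x |-> x_+ is 1-Lipschitz, |f (z + theta) - f z| <= 2 |theta| |z| + theta^2.
   Hence |E - theta0| <= 2 |theta| E|Z| + theta^2 int phi
   <= (4 sigma |theta| + 2.7202 theta^2) / sqrt (2 pi), and a case split on
   theta^2 <= 0.777 sigma |theta| bounds the square of this by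
   max (6 sigma^2 theta^2, 10 theta^4). *)

Lemma pos_part_sub_le a b : Rabs (pos_part a - pos_part b) <= Rabs (a - b).
Proof.
  unfold pos_part, Rmax; repeat destruct Rle_dec; unfold Rabs; repeat destruct Rcase_abs; lra.
Qed.

Lemma pos_part_sq_shift_le t th z :
  Rabs (pos_part ((z + th) ^ 2 - t) - pos_part (z ^ 2 - t)) <= 2 * Rabs th * Rabs z + th ^ 2.
Proof.
  eapply Rle_trans; [apply pos_part_sub_le|].
  replace ((z + th) ^ 2 - t - (z ^ 2 - t)) with (2 * th * z + th ^ 2) by ring.
  eapply Rle_trans; [apply Rabs_triang|].
  rewrite !Rabs_mult, (Rabs_right 2), (Rabs_right (th ^ 2)); try lra.
  apply Rle_ge, pow2_ge_0.
Qed.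

Lemma ex_RInt_comp_plus (f : R -> R) v a b :
  ex_RInt f (a + v) (b + v) -> ex_RInt (fun y => f (y + v)) a b.
Proof.
  intros Hf.
  pose proof (ex_RInt_comp_lin f 1 v a b) as H.
  rewrite !Rmult_1_l in H.
  apply (ex_RInt_ext (fun y => scal 1 (f (1 * y + v)))).
  - intros y _. rewrite !Rmult_1_l. reflexivity.
  - exact (H Hf).
Qed.

Lemma RInt_comp_plus (f : R -> R) v a b :
  ex_RInt f (a + v) (b + v) -> RInt (fun y => f (y + v)) a b = RInt f (a + v) (b + v).
Proof.
  intros Hf.
  pose proof (RInt_comp_lin f 1 v a b) as H.
  rewrite !Rmult_1_l in H. rewrite <- (H Hf).
  apply RInt_ext. intros y _. rewrite !Rmult_1_l. reflexivity.
Qed.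

Lemma RInt_even_opp (g : R -> R) a b :
  (forall x, g (- x) = g x) -> ex_RInt g (- a) (- b) -> RInt g (- b) (- a) = RInt g a b.
Proof.
  intros Hg Hab.
  rewrite <- opp_RInt_swap by exact Hab.
  symmetry. apply is_RInt_unique.
  apply (is_RInt_ext (fun y => opp (opp (g (- y))))).
  - intros y _. rewrite opp_opp. apply Hg.
  - apply (is_RInt_opp (fun y => opp (g (- y)))).
    apply (is_RInt_comp_opp g). exact (@RInt_correct R_CompleteNormedModule g _ _ Hab).
Qed.

Definition gauss (s z : R) : R := exp (- z ^ 2 / (2 * s ^ 2)).

Lemma normal_density_0 s z : normal_density 0 s z = gauss s z / (s * sqrt (2 * PI)).
Proof. unfold normal_density, gauss. rewrite Rminus_0_r. reflexivity. Qed.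

Lemma normal_density_shift th s z : normal_density th s (z + th) = normal_density 0 s z.
Proof. unfold normal_density. do 4 f_equal. ring. Qed.

Lemma gauss_pos s z : 0 < gauss s z.
Proof. apply exp_pos. Qed.

Lemma gauss_opp s z : gauss s (- z) = gauss s z.
Proof. unfold gauss. do 3 f_equal. ring. Qed.

Lemma gauss_0 s : gauss s 0 = 1.
Proof. unfold gauss. rewrite <- exp_0. f_equal. unfold Rdiv. ring. Qed.

Lemma continuous_gauss s z : continuous (gauss s) z.
Proof. apply (@ex_derive_continuous R_AbsRing R_NormedModule). unfold gauss. now auto_derive. Qed.

Lemma ex_RInt_gauss s a b : ex_RInt (gauss s) a b.
Proof. apply (@ex_RInt_continuous R_CompleteNormedModule). intros z _. apply continuous_gauss. Qed.

Lemma is_derive_gauss s z : 0 < s -> is_derive (gauss s) z (- z / s ^ 2 * gauss s z).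
Proof.
  intros Hs. unfold gauss. auto_derive; [trivial|].
  replace (- (z * (z * 1)) * / (2 * (s * (s * 1)))) with (- z ^ 2 / (2 * s ^ 2))
    by (field; lra).
  field. lra.
Qed.

Lemma is_RInt_mul_gauss s a b : 0 < s ->
  is_RInt (fun z => z * gauss s z) a b (s ^ 2 * (gauss s a - gauss s b)).
Proof.
  intros Hs.
  replace (s ^ 2 * (gauss s a - gauss s b))
    with (minus (- s ^ 2 * gauss s b) (- s ^ 2 * gauss s a))
    by (unfold minus, plus, opp; simpl; ring).
  apply (is_RInt_derive (fun z => - s ^ 2 * gauss s z)).
  - intros z _.
    replace (z * gauss s z) with (- s ^ 2 * (- z / s ^ 2 * gauss s z)) by (field; lra).
    apply is_derive_scal, is_derive_gauss, Hs.
  - intros z _. apply (@continuous_mult R_UniformSpace).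
    + apply continuous_id.
    + apply continuous_gauss.
Qed.

Lemma exp_opp_le_quadratic u : 0 <= u -> exp (- u) <= 1 - u + u ^ 2 / 2.
Proof.
  intros Hu.
  set (h := fun v => 1 - v + v ^ 2 / 2 - exp (- v)).
  assert (Hh : is_RInt (fun v => -1 + v + exp (- v)) 0 u (minus (h u) (h 0))).
  { apply (is_RInt_derive h).
    - intros v _. unfold h. auto_derive; [trivial|]. field.
    - intros v _. apply (@ex_derive_continuous R_AbsRing R_NormedModule).
      now auto_derive. }
  assert (H0 : 0 <= RInt (fun v => -1 + v + exp (- v)) 0 u).
  { apply RInt_ge_0; [exact Hu | eexists; exact Hh |].
    intros v _. pose proof (exp_ineq1_le (- v)). lra. }
  rewrite (is_RInt_unique _ _ _ _ Hh) in H0.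
  unfold h, minus, plus, opp in H0; simpl in H0.
  rewrite Ropp_0, exp_0 in H0. lra.
Qed.

Lemma RInt_gauss_center_le s a : 0 < s -> 0 <= a ->
  RInt (gauss s) (- a) a <= 2 * a - a ^ 3 / (3 * s ^ 2) + a ^ 5 / (20 * s ^ 4).
Proof.
  intros Hs Ha.
  set (G := fun z => z - z ^ 3 / (6 * s ^ 2) + z ^ 5 / (40 * s ^ 4)).
  set (g := fun z => 1 - z ^ 2 / (2 * s ^ 2) + z ^ 4 / (8 * s ^ 4)).
  assert (Hg : is_RInt g (- a) a (minus (G a) (G (- a)))).
  { apply (is_RInt_derive G).
    - intros z _. unfold G, g. auto_derive; [trivial|]. field. lra.
    - intros z _. apply (@ex_derive_continuous R_AbsRing R_NormedModule).
      unfold g. auto_derive. split; lra. }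
  apply Rle_trans with (RInt g (- a) a).
  - apply RInt_le; [lra | apply ex_RInt_gauss | eexists; exact Hg |].
    intros z _. unfold gauss, g.
    replace (- z ^ 2 / (2 * s ^ 2)) with (- (z ^ 2 / (2 * s ^ 2))) by (field; lra).
    eapply Rle_trans; [apply exp_opp_le_quadratic|].
    + apply Rmult_le_pos; [apply pow2_ge_0 | left; apply Rinv_0_lt_compat; nra].
    + right. field. lra.
  - rewrite (is_RInt_unique _ _ _ _ Hg). unfold G, minus, plus, opp; simpl.
    right. field. lra.
Qed.

Lemma RInt_gauss_tail_le s L K : 0 < s -> 0 < L <= K ->
  RInt (gauss s) L K <= s ^ 2 / L * gauss s L.
Proof.
  intros Hs HLK.
  pose proof (is_RInt_scal _ _ _ (/ L) _ (is_RInt_mul_gauss s L K Hs)) as Hm.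
  apply Rle_trans with (RInt (fun z => / L * (z * gauss s z)) L K).
  - apply RInt_le; [lra | apply ex_RInt_gauss | eexists; exact Hm |].
    intros z Hz. pose proof (gauss_pos s z).
    replace (/ L * (z * gauss s z)) with (z / L * gauss s z) by (field; lra).
    rewrite <- (Rmult_1_l (gauss s z)) at 1.
    apply Rmult_le_compat_r; [lra|].
    apply (Rmult_le_reg_r L); [lra|]. unfold Rdiv. rewrite Rmult_assoc, Rinv_l; lra.
  - rewrite (is_RInt_unique (fun z => / L * (z * gauss s z)) _ _ _ Hm). unfold scal; simpl; unfold mult; simpl.
    pose proof (gauss_pos s K).
    assert (0 < s ^ 2 / L) by (apply Rdiv_lt_0_compat; nra).
    replace (/ L * (s ^ 2 * (gauss s L - gauss s K)))
      with (s ^ 2 / L * gauss s L - s ^ 2 / L * gauss s K) by (field; lra).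
    nra.
Qed.

Lemma exp_INR_mult n x : exp (INR n * x) = exp x ^ n.
Proof.
  induction n as [|n IH].
  - rewrite Rmult_0_l. apply exp_0.
  - rewrite S_INR, Rmult_plus_distr_r, Rmult_1_l, exp_plus, IH. simpl. ring.
Qed.

Lemma exp_neg_9_8_le : exp (- (9 / 8)) <= (64 / 73) ^ 8.
Proof.
  rewrite exp_Ropp.
  replace (9 / 8) with (INR 8 * (9 / 64)) by (simpl; field).
  rewrite exp_INR_mult.
  replace ((64 / 73) ^ 8) with (/ (1 + 9 / 64) ^ 8) by field.
  apply Rinv_le_contravar; [apply pow_lt; lra|].
  apply pow_incr. split; [lra | apply exp_ineq1_le].
Qed.

(* The exact mass is s sqrt (2 pi) ~ 2.5066 s.  Without the Gaussian integral we use
   exp (-u) <= 1 - u + u^2/2 on [-3s/2, 3s/2] and the tail bounds outside; the loss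
   of less than 9% is absorbed by the constants of the final inequality. *)
Lemma RInt_gauss_le s K : 0 < s -> 3 / 2 * s <= K -> RInt (gauss s) (- K) K <= 2.7202 * s.
Proof.
  intros Hs HK.
  set (L := 3 / 2 * s).
  assert (Hc := RInt_gauss_center_le s L Hs ltac:(unfold L; lra)).
  assert (Ht := RInt_gauss_tail_le s L K Hs ltac:(unfold L; lra)).
  assert (Hgl : gauss s L = exp (- (9 / 8))) by (unfold gauss, L; f_equal; field; lra).
  rewrite <- (RInt_Chasles (gauss s) (- K) (- L) K), <- (RInt_Chasles (gauss s) (- L) L K)
    by apply ex_RInt_gauss.
  rewrite (RInt_even_opp (gauss s) L K (gauss_opp s) (ex_RInt_gauss s _ _)).
  unfold plus; simpl.
  replace (2 * L - L ^ 3 / (3 * s ^ 2) + L ^ 5 / (20 * s ^ 4))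
    with (s * (3 - 9 / 8 + 243 / 640)) in Hc by (unfold L; field; lra).
  replace (s ^ 2 / L) with (s * (2 / 3)) in Ht by (unfold L; field; lra).
  rewrite Hgl in Ht.
  pose proof exp_neg_9_8_le.
  assert (s * (2 / 3) * exp (- (9 / 8)) <= s * (2 / 3) * (64 / 73) ^ 8)
    by (apply Rmult_le_compat_l; lra).
  lra.
Qed.

Lemma ex_RInt_abs_mul_gauss s a b : ex_RInt (fun z => Rabs z * gauss s z) a b.
Proof.
  apply (@ex_RInt_continuous R_CompleteNormedModule). intros z _.
  apply (@continuous_mult R_UniformSpace); [apply continuous_Rabs | apply continuous_gauss].
Qed.

Lemma RInt_abs_mul_gauss_le s K : 0 < s -> 0 <= K ->
  RInt (fun z => Rabs z * gauss s z) (- K) K <= 2 * s ^ 2.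
Proof.
  intros Hs HK.
  assert (Hhalf : RInt (fun z => Rabs z * gauss s z) 0 K = s ^ 2 * (1 - gauss s K)).
  { rewrite <- (gauss_0 s). apply is_RInt_unique.
    apply (is_RInt_ext (fun z => z * gauss s z)), is_RInt_mul_gauss, Hs.
    intros z Hz. rewrite Rmin_left, Rmax_right in Hz by lra.
    rewrite Rabs_right by lra. reflexivity. }
  rewrite <- (RInt_Chasles _ (- K) 0 K) by apply ex_RInt_abs_mul_gauss.
  pose proof (RInt_even_opp (fun z => Rabs z * gauss s z) 0 K) as Hleft.
  rewrite Ropp_0 in Hleft.
  rewrite Hleft, Hhalf by (apply ex_RInt_abs_mul_gauss ||
                           (intros z; rewrite Rabs_Ropp, gauss_opp; reflexivity)).
  unfold plus; simpl.
  pose proof (gauss_pos s K). pose proof (pow2_ge_0 s). nra.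
Qed.

Lemma is_RInt_shift_majorant_le s th K : 0 < s -> 3 / 2 * s <= K ->
  exists I, is_RInt (fun z => (2 * Rabs th * Rabs z + th ^ 2) * normal_density 0 s z) (- K) K I
    /\ I <= (4 * s * Rabs th + 2.7202 * th ^ 2) / sqrt (2 * PI).
Proof.
  intros Hs HK.
  assert (Hp : 0 < sqrt (2 * PI)) by (apply sqrt_lt_R0; pose proof PI_RGT_0; lra).
  set (c := / (s * sqrt (2 * PI))).
  assert (Hc : 0 < c) by (apply Rinv_0_lt_compat; nra).
  set (I1 := RInt (fun z => Rabs z * gauss s z) (- K) K).
  set (I0 := RInt (gauss s) (- K) K).
  exists (c * (2 * Rabs th * I1 + th ^ 2 * I0)). split.
  - apply (is_RInt_ext (fun z => scal c (plus (scal (2 * Rabs th) (Rabs z * gauss s z))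
                                              (scal (th ^ 2) (gauss s z))))).
    + intros z _. unfold c. rewrite normal_density_0.
      unfold scal, plus; simpl; unfold mult; simpl. field. nra.
    + change (c * (2 * Rabs th * I1 + th ^ 2 * I0))
        with (scal c (plus (scal (2 * Rabs th) I1) (scal (th ^ 2) I0))).
      apply (@is_RInt_scal R_NormedModule).
      apply (@is_RInt_plus R_NormedModule); apply (@is_RInt_scal R_NormedModule).
      * exact (@RInt_correct R_CompleteNormedModule _ _ _ (ex_RInt_abs_mul_gauss s _ _)).
      * exact (@RInt_correct R_CompleteNormedModule _ _ _ (ex_RInt_gauss s _ _)).
  - assert (H1 : I1 <= 2 * s ^ 2) by (apply RInt_abs_mul_gauss_le; lra).
    assert (H0 : I0 <= 2.7202 * s) by (apply RInt_gauss_le; lra).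
    pose proof (Rabs_pos th). pose proof (pow2_ge_0 th).
    replace ((4 * s * Rabs th + 2.7202 * th ^ 2) / sqrt (2 * PI))
      with (c * (2 * Rabs th * (2 * s ^ 2) + th ^ 2 * (2.7202 * s))) by (unfold c; field; lra).
    apply Rmult_le_compat_l; [lra|].
    apply Rplus_le_compat; apply Rmult_le_compat_l; lra.
Qed.

Lemma RInt_shift_diff_le (f : R -> R) s th K : 0 < s -> 3 / 2 * s <= K ->
  (forall z, Rabs (f (z + th) - f z) <= 2 * Rabs th * Rabs z + th ^ 2) ->
  ex_RInt (fun y => f y * normal_density th s y) (- K + th) (K + th) ->
  ex_RInt (fun y => f y * normal_density 0 s y) (- K) K ->
  Rabs (RInt (fun y => f y * normal_density th s y) (- K + th) (K + th)
        - RInt (fun y => f y * normal_density 0 s y) (- K) K)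
  <= (4 * s * Rabs th + 2.7202 * th ^ 2) / sqrt (2 * PI).
Proof.
  intros Hs HK Hf Hex_th Hex_0.
  set (h0 := fun z => f z * normal_density 0 s z) in *.
  set (h1 := fun z => f (z + th) * normal_density 0 s z).
  assert (Hshift : forall z, f (z + th) * normal_density th s (z + th) = h1 z)
    by (intros z; unfold h1; rewrite normal_density_shift; reflexivity).
  assert (Hex_1 : ex_RInt h1 (- K) K).
  { apply (ex_RInt_ext (fun z => f (z + th) * normal_density th s (z + th))).
    - intros z _. apply Hshift.
    - exact (ex_RInt_comp_plus (fun y => f y * normal_density th s y) th _ _ Hex_th). }
  rewrite <- (RInt_comp_plus (fun y => f y * normal_density th s y) th _ _ Hex_th).
  rewrite (RInt_ext _ h1 _ _ (fun z _ => Hshift z)).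
  change (RInt h1 (- K) K - RInt h0 (- K) K) with (minus (RInt h1 (- K) K) (RInt h0 (- K) K)).
  rewrite <- (RInt_minus h1 h0 _ _ Hex_1 Hex_0).
  assert (Hex_d : ex_RInt (fun z => minus (h1 z) (h0 z)) (- K) K)
    by exact (ex_RInt_minus h1 h0 _ _ Hex_1 Hex_0).
  destruct (is_RInt_shift_majorant_le s th K Hs HK) as [I [HB HI]].
  assert (Hnn : forall z, 0 <= normal_density 0 s z).
  { intros z. rewrite normal_density_0. apply Rdiv_le_0_compat; [left; apply gauss_pos|].
    apply Rmult_lt_0_compat; [exact Hs | apply sqrt_lt_R0; pose proof PI_RGT_0; lra]. }
  assert (HKK : - K <= K) by lra.
  eapply Rle_trans; [exact (abs_RInt_le _ _ _ HKK Hex_d)|].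
  rewrite <- (is_RInt_unique _ _ _ _ HB) in HI.
  eapply Rle_trans; [| exact HI].
  apply RInt_le; [lra | exact (ex_RInt_norm _ _ _ Hex_d) | eexists; exact HB |].
  intros z _. unfold minus, plus, opp, h0, h1; simpl.
  replace (f (z + th) * normal_density 0 s z + - (f z * normal_density 0 s z))
    with ((f (z + th) - f z) * normal_density 0 s z) by ring.
  rewrite Rabs_mult, (Rabs_right _ (Rle_ge _ _ (Hnn z))).
  apply Rmult_le_compat_r; [apply Hnn | apply Hf].
Qed.

Lemma improper_integral_R_window f l v eps : improper_integral_R f l -> 0 < eps ->
  exists M, forall K, M <= K ->
    ex_RInt f (- K + v) (K + v) /\ Rabs (RInt f (- K + v) (K + v) - l) < eps.
Proof.
  intros Hf Heps. destruct (Hf eps Heps) as [M HM].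
  exists (Rabs M + Rabs v). intros K HK.
  pose proof (Rle_abs M). pose proof (Rle_abs (- M)). pose proof (Rle_abs v). pose proof (Rle_abs (- v)).
  rewrite !Rabs_Ropp in *.
  destruct (HM (- K + v) (K + v)) as [pr Hpr]; [lra | lra |].
  split; [exact (ex_RInt_Reals_1 _ _ _ pr) | rewrite (RInt_Reals _ _ _ pr); exact Hpr].
Qed.

Lemma PI_gt_3_14 : 3.14 < PI.
Proof.
  destruct (PI_2_3_7_ineq 1) as [H _].
  simpl in H. unfold tg_alt, PI_2_3_7_tg, Ratan_seq in H. simpl in H.
  lra.
Qed.

Lemma shift_bound_sq_le s th : 0 <= s ->
  ((4 * s * Rabs th + 2.7202 * th ^ 2) / sqrt (2 * PI)) ^ 2
  <= Rmax (6 * s ^ 2 * th ^ 2) (10 * th ^ 4).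
Proof.
  intros Hs. pose proof PI_gt_3_14.
  assert (Hp2 : sqrt (2 * PI) ^ 2 = 2 * PI) by (apply pow2_sqrt; lra).
  assert (Hp : 0 < sqrt (2 * PI)) by (apply sqrt_lt_R0; lra).
  assert (Hth : th ^ 2 = Rabs th ^ 2) by (symmetry; apply pow2_abs).
  replace (4 * s * Rabs th + 2.7202 * th ^ 2) with (4 * (s * Rabs th) + 2.7202 * th ^ 2) by ring.
  replace (6 * s ^ 2 * th ^ 2) with (6 * (s * Rabs th) ^ 2) by (rewrite Hth; ring).
  replace (10 * th ^ 4) with (10 * (th ^ 2) ^ 2) by ring.
  set (a := s * Rabs th). set (b := th ^ 2).
  assert (Ha : 0 <= a) by (unfold a; pose proof (Rabs_pos th); nra).
  assert (Hb : 0 <= b) by apply pow2_ge_0.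
  unfold Rdiv. rewrite Rpow_mult_distr, pow_inv, Hp2.
  assert (Hpi : 0 < 2 * PI) by lra.
  destruct (Rle_lt_dec b (0.777 * a)) as [Hc | Hc].
  - eapply Rle_trans; [| apply Rmax_l].
    apply (Rmult_le_reg_r (2 * PI)); [lra|].
    rewrite Rmult_assoc, Rinv_l by lra.
    assert ((4 * a + 2.7202 * b) ^ 2 <= (6.114 * a) ^ 2) by (apply pow_incr; lra).
    assert (37.68 * a ^ 2 <= 6 * a ^ 2 * (2 * PI)) by (pose proof (pow2_ge_0 a); nra).
    nra.
  - eapply Rle_trans; [| apply Rmax_r].
    apply (Rmult_le_reg_r (2 * PI)); [lra|].
    rewrite Rmult_assoc, Rinv_l by lra.
    assert ((4 * a + 2.7202 * b) ^ 2 <= (7.869 * b) ^ 2) by (apply pow_incr; nra).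
    assert (62.8 * b ^ 2 <= 10 * b ^ 2 * (2 * PI)) by (pose proof (pow2_ge_0 b); nra).
    nra.
Qed.

Theorem lemma2 (theta sigma tau E theta0 : R) :
  0 < sigma -> 1 <= tau ->
  normal_expectation theta sigma (fun y => pos_part (y ^ 2 - sigma ^ 2 * tau)) E ->
  normal_expectation 0 sigma (fun y => pos_part (y ^ 2 - sigma ^ 2 * tau)) theta0 ->
  (E - theta0) ^ 2 <=
    Rmax (6 * sigma ^ 2 * theta ^ 2
          + sigma ^ 4 * ((4 * sqrt tau + 18) / exp (tau / 2)))
         (10 * theta ^ 4).
Proof.
  intros Hs _ HE H0.
  set (f := fun y => pos_part (y ^ 2 - sigma ^ 2 * tau)) in *.
  set (D := (4 * sigma * Rabs theta + 2.7202 * theta ^ 2) / sqrt (2 * PI)).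
  assert (HD : Rabs (E - theta0) <= D).
  { apply Rle_plus_epsilon. intros eps Heps.
    destruct (improper_integral_R_window _ _ theta (eps / 2) HE ltac:(lra)) as [M1 HM1].
    destruct (improper_integral_R_window _ _ 0 (eps / 2) H0 ltac:(lra)) as [M0 HM0].
    set (K := Rmax (Rmax M1 M0) (3 / 2 * sigma)).
    assert (HK1 : M1 <= K) by (unfold K; eapply Rle_trans; [apply Rmax_l | apply Rmax_l]).
    assert (HK0 : M0 <= K) by (unfold K; eapply Rle_trans; [apply Rmax_r | apply Rmax_l]).
    assert (HKs : 3 / 2 * sigma <= K) by apply Rmax_r.
    destruct (HM1 K HK1) as [Hex1 Happrox1]. destruct (HM0 K HK0) as [Hex0 Happrox0].
    rewrite !Rplus_0_r in Hex0, Happrox0.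
    pose proof (RInt_shift_diff_le f sigma theta K Hs HKs
                  (fun z => pos_part_sq_shift_le _ theta z) Hex1 Hex0) as Hdiff.
    fold D in Hdiff. revert Happrox1 Happrox0 Hdiff. split_Rabs; lra. }
  assert (Hrem : 0 <= sigma ^ 4 * ((4 * sqrt tau + 18) / exp (tau / 2))).
  { apply Rmult_le_pos; [pose proof (pow_lt sigma 4 Hs); lra|].
    apply Rmult_le_pos; [pose proof (sqrt_pos tau); lra | left; apply Rinv_0_lt_compat, exp_pos]. }
  rewrite <- (pow2_abs (E - theta0)).
  eapply Rle_trans; [apply pow_incr; split; [apply Rabs_pos | exact HD]|].
  eapply Rle_trans; [apply shift_bound_sq_le; lra|].
  apply Rle_max_compat_r. lra.
Qed.
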